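(* Let $M$ be a constant real $2n\times2n$ symmetric positive definite matrix such that $$\frac{Q+2}{4}\,\langle M\nabla_{\mathbb H}\phi_M,\nabla_{\mathbb H}\phi_M\rangle(x,t)=\phi_M(x,t)\,\mathcal L_M\phi_M(x,t)\quad\text{for all }(x,t)\in\mathbb R^{2n+1}.$$ Then $M$ is symplectic, i.e. $M^{-1}=J^tMJ$.
   Context: Points of $\mathbb R^{2n+1}$ are written $(x,t)$ with $x\in\mathbb R^{2n}$, $t\in\mathbb R$. Let $J=\begin{pmatrix}0&-\mathbb I_n\\ \mathbb I_n&0\end{pmatrix}$ and $Q=2n+2$. The horizontal vector fields are $X_i=\partial_{x_i}+2(Jx)_i\partial_t$, $i=1,\dots,2n$; $\nabla_{\mathbb H}\psi=(X_1\psi,\dots,X_{2n}\psi)$, $D^2_{\mathbb H}\psi=\big(\tfrac12(X_iX_j+X_jX_i)\psi\big)_{i,j}$, and $\mathcal L_M\psi=\mathrm{tr}(MD^2_{\mathbb H}\psi)$. For symmetric positive definite $M$, $\phi_M(x,t)=\langle M^{-1}x,x\rangle^2+t^2$. *)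

From Stdlib Require Import Reals Lra Lia Arith ClassicalEpsilon.
Open Scope R_scope.

Fixpoint rsum (k : nat) (f : nat -> R) : R :=
  match k with O => 0 | S k' => rsum k' f + f k' end.

(* The derivative of a real function at a point (0 if not differentiable;
   for the smooth functions considered here it is the usual derivative). *)
Definition Der (f : R -> R) (a : R) : R :=
  match excluded_middle_informative (exists l, derivable_pt_lim f a l) with
  | left H => proj1_sig (constructive_indefinite_description _ H)
  | right _ => 0
  end.

(* Points of R^{2n+1} are pairs (x,t) with x : nat -> R (only the
   coordinates 0..2n-1 are used) and t : R. *)
Definition upd (x : nat -> R) (i : nat) (s : R) : nat -> R :=
  fun j => if Nat.eqb j i then s else x j.

Definition Dx (i : nat) (f : (nat -> R) -> R -> R) : (nat -> R) -> R -> R :=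
  fun x t => Der (fun s => f (upd x i s) t) (x i).

Definition Dt (f : (nat -> R) -> R -> R) : (nat -> R) -> R -> R :=
  fun x t => Der (fun s => f x s) t.

(* J = [[0, -I_n], [I_n, 0]], indices 0..2n-1. *)
Definition Jmat (n : nat) (i j : nat) : R :=
  if (i <? n)%nat then (if Nat.eqb j (i + n) then -1 else 0)
  else if (i <? 2 * n)%nat then (if Nat.eqb (j + n) i then 1 else 0)
  else 0.

Definition Jx (n : nat) (x : nat -> R) (i : nat) : R :=
  rsum (2 * n) (fun j => Jmat n i j * x j).

Definition Xf (n i : nat) (f : (nat -> R) -> R -> R) : (nat -> R) -> R -> R :=
  fun x t => Dx i f x t + 2 * Jx n x i * Dt f x t.

Definition D2H (n i j : nat) (f : (nat -> R) -> R -> R) : (nat -> R) -> R -> R :=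
  fun x t => / 2 * (Xf n i (Xf n j f) x t + Xf n j (Xf n i f) x t).

Definition LM (n : nat) (M : nat -> nat -> R) (f : (nat -> R) -> R -> R)
  : (nat -> R) -> R -> R :=
  fun x t => rsum (2 * n) (fun i => rsum (2 * n) (fun j => M i j * D2H n j i f x t)).

Definition MgradH (n : nat) (M : nat -> nat -> R) (f : (nat -> R) -> R -> R)
  : (nat -> R) -> R -> R :=
  fun x t => rsum (2 * n) (fun i => rsum (2 * n)
               (fun j => M i j * Xf n j f x t * Xf n i f x t)).

Definition phiM (n : nat) (Minv : nat -> nat -> R) : (nat -> R) -> R -> R :=
  fun x t => (rsum (2 * n) (fun i => rsum (2 * n) (fun j => Minv i j * x j * x i))) ^ 2
             + t ^ 2.

Definition Qdim (n : nat) : R := 2 * INR n + 2.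

Definition delta (i j : nat) : R := if Nat.eqb i j then 1 else 0.

From Pilot Require Import Defs.
From Stdlib Require Import Reals Lra Lia ClassicalEpsilon FunctionalExtensionality.
Open Scope R_scope.

(** Writing [a = M^{-1} x], [b = J x] and [q = <M^{-1} x, x>], one finds
    [X_i phi_M = 4 q a_i + 4 t b_i] and
    [(D^2_H phi_M)_{ij} = 8 a_i a_j + 4 q (M^{-1})_{ij} + 8 b_i b_j]
    (the terms [4 t J_{ij}] cancel by antisymmetry of [J]).  Both sides of
    the hypothesis are therefore polynomials of degree 2 in [t], and comparing
    the coefficients of [t^2] gives [(n+1) <M J x, J x> = (n+1) <M^{-1} x, x>]
    for every [x].  The symmetric matrices [M^{-1}] and [J^t M J] thus have the
    same quadratic form, hence coincide by polarization. *)

Lemma rsum_ext k f g :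
  (forall i, (i < k)%nat -> f i = g i) -> rsum k f = rsum k g.
Proof.
induction k as [|k IH]; intros H; simpl; [reflexivity|].
rewrite IH, H; [reflexivity | lia | intros; apply H; lia].
Qed.

Lemma rsum_add k f g : rsum k (fun i => f i + g i) = rsum k f + rsum k g.
Proof. induction k as [|k IH]; simpl; [lra | rewrite IH; lra]. Qed.

Lemma rsum_scal_l k c f : rsum k (fun i => c * f i) = c * rsum k f.
Proof. induction k as [|k IH]; simpl; [lra | rewrite IH; lra]. Qed.

Lemma rsum_scal_r k c f : rsum k (fun i => f i * c) = rsum k f * c.
Proof. induction k as [|k IH]; simpl; [lra | rewrite IH; lra]. Qed.

Lemma rsum_const k c : rsum k (fun _ => c) = INR k * c.
Proof. induction k as [|k IH]; simpl rsum; [simpl; lra | rewrite IH, S_INR; lra]. Qed.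

Lemma rsum_mul_rsum k m f g :
  rsum k f * rsum m g = rsum k (fun i => rsum m (fun j => f i * g j)).
Proof.
rewrite <- rsum_scal_r; apply rsum_ext; intros i _.
rewrite <- rsum_scal_l; reflexivity.
Qed.

Lemma rsum_swap k m (f : nat -> nat -> R) :
  rsum k (fun i => rsum m (fun j => f i j)) = rsum m (fun j => rsum k (fun i => f i j)).
Proof.
induction k as [|k IH]; simpl.
- induction m as [|m IHm]; simpl; [reflexivity | rewrite <- IHm; lra].
- rewrite IH, <- rsum_add; reflexivity.
Qed.

Lemma rsum_delta_r k f i : (i < k)%nat -> rsum k (fun j => f j * delta j i) = f i.
Proof.
induction k as [|k IH]; intros Hi; [lia|]; simpl; unfold delta at 2.
destruct (Nat.eqb_spec k i) as [<-|Hki].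
- rewrite (rsum_ext k _ (fun _ => 0)), rsum_const; [lra|].
  intros j Hj; unfold delta; destruct (Nat.eqb_spec j k); [lia | lra].
- rewrite IH by lia; lra.
Qed.

Definition symmetric (N : nat) (A : nat -> nat -> R) : Prop :=
  forall i j, (i < N)%nat -> (j < N)%nat -> A i j = A j i.

Definition matvec (N : nat) (A : nat -> nat -> R) (v : nat -> R) (i : nat) : R :=
  rsum N (fun j => A i j * v j).

Definition bform (N : nat) (A : nat -> nat -> R) (u v : nat -> R) : R :=
  rsum N (fun i => rsum N (fun j => A i j * u j * v i)).

Definition qform (N : nat) (A : nat -> nat -> R) (v : nat -> R) : R := bform N A v v.

Definition congr (N : nat) (P A : nat -> nat -> R) (i j : nat) : R :=
  rsum N (fun k => rsum N (fun l => P k i * A k l * P l j)).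

Lemma qform_ext N A B u v :
  (forall i j, (i < N)%nat -> (j < N)%nat -> A i j = B i j) ->
  (forall i, (i < N)%nat -> u i = v i) -> qform N A u = qform N B v.
Proof.
intros HAB Huv; apply rsum_ext; intros i Hi; apply rsum_ext; intros j Hj.
rewrite HAB, !Huv by assumption; reflexivity.
Qed.

Lemma qform_matvec_l N A v : qform N A v = rsum N (fun i => matvec N A v i * v i).
Proof. apply rsum_ext; intros i _; apply rsum_scal_r. Qed.

Lemma qform_comb N A u v a b :
  qform N A (fun k => a * u k + b * v k)
  = a ^ 2 * qform N A u + a * b * (bform N A u v + bform N A v u) + b ^ 2 * qform N A v.
Proof.
unfold qform, bform.
rewrite (rsum_ext N _ (fun i =>
  a ^ 2 * rsum N (fun j => A i j * u j * u i) + a * b * rsum N (fun j => A i j * u j * v i)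
  + a * b * rsum N (fun j => A i j * v j * u i) + b ^ 2 * rsum N (fun j => A i j * v j * v i))).
- rewrite !rsum_add, !rsum_scal_l; ring.
- intros i _; rewrite <- !rsum_scal_l, <- !rsum_add; apply rsum_ext; intros; ring.
Qed.

Lemma bform_delta N A a b : (a < N)%nat -> (b < N)%nat ->
  bform N A (fun k => delta k a) (fun k => delta k b) = A b a.
Proof.
intros Ha Hb; unfold bform.
rewrite (rsum_ext N _ (fun i => A i a * delta i b)); [exact (rsum_delta_r N (fun i => A i a) b Hb)|].
intros i _; rewrite <- (rsum_delta_r N (fun j => A i j * delta i b) a Ha).
apply rsum_ext; intros; ring.
Qed.

Lemma qform_polarization N A B :
  symmetric N A -> symmetric N B -> (forall v, qform N A v = qform N B v) ->
  forall i j, (i < N)%nat -> (j < N)%nat -> A i j = B i j.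
Proof.
intros HA HB Hq i j Hi Hj.
pose proof (Hq (fun k => 1 * delta k i + 1 * delta k j)) as Hij.
rewrite !qform_comb in Hij; unfold qform in Hij; rewrite !bform_delta in Hij by assumption.
pose proof (Hq (fun k => delta k i)) as Hii; pose proof (Hq (fun k => delta k j)) as Hjj.
unfold qform in Hii, Hjj; rewrite !bform_delta in Hii, Hjj by assumption.
rewrite (HA j i), (HB j i) in Hij by assumption; lra.
Qed.

Lemma qform_congr N P A v : qform N A (matvec N P v) = qform N (congr N P A) v.
Proof.
unfold qform, bform, congr, matvec.
transitivity (rsum N (fun i => rsum N (fun j => rsum N (fun k => rsum N (fun l =>
                P i k * A i j * P j l * v l * v k))))).
- apply rsum_ext; intros i _; apply rsum_ext; intros j _.
  rewrite Rmult_assoc, (Rmult_comm (rsum _ _)), rsum_mul_rsum, <- rsum_scal_l.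
  apply rsum_ext; intros k _; rewrite <- rsum_scal_l; apply rsum_ext; intros; ring.
- rewrite (rsum_ext N _ (fun i => rsum N (fun k => rsum N (fun j => rsum N (fun l =>
             P i k * A i j * P j l * v l * v k))))) by (intros; apply rsum_swap).
  rewrite rsum_swap; apply rsum_ext; intros k _.
  rewrite (rsum_ext N _ (fun i => rsum N (fun l => rsum N (fun j =>
             P i k * A i j * P j l * v l * v k)))) by (intros; apply rsum_swap).
  rewrite rsum_swap; apply rsum_ext; intros l _.
  rewrite <- !rsum_scal_r; apply rsum_ext; intros i _.
  rewrite <- !rsum_scal_r; apply rsum_ext; intros; ring.
Qed.

Lemma congr_symmetric N P A : symmetric N A -> symmetric N (congr N P A).
Proof.
intros HA i j _ _; unfold congr; rewrite rsum_swap.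
apply rsum_ext; intros k Hk; apply rsum_ext; intros l Hl.
rewrite (HA l k) by assumption; ring.
Qed.

Section RightInverse.

Variables (N : nat) (A P : nat -> nat -> R).
Hypothesis right_inverse : forall i j, (i < N)%nat -> (j < N)%nat ->
  rsum N (fun k => A i k * P k j) = delta i j.

Lemma congr_right_inverse i j : (i < N)%nat -> (j < N)%nat -> congr N P A i j = P j i.
Proof.
intros Hi Hj; unfold congr.
rewrite <- (rsum_delta_r N (fun k => P k i) j Hj); apply rsum_ext; intros k Hk.
rewrite <- right_inverse, <- rsum_scal_l by assumption; apply rsum_ext; intros; ring.
Qed.

Lemma right_inverse_symmetric : symmetric N A -> symmetric N P.
Proof.
intros HA i j Hi Hj.
rewrite <- (congr_right_inverse j i), <- (congr_right_inverse i j) by assumption.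
apply congr_symmetric; assumption.
Qed.

Lemma trace_right_inverse : rsum N (fun i => rsum N (fun j => A i j * P j i)) = INR N.
Proof.
rewrite (rsum_ext N _ (fun _ => 1)), rsum_const; [ring|].
intros i Hi; rewrite right_inverse by assumption; unfold delta; rewrite Nat.eqb_refl; reflexivity.
Qed.

End RightInverse.

Lemma J_antisymmetric n i j : Jmat n i j = - Jmat n j i.
Proof.
unfold Jmat.
destruct (Nat.ltb_spec i n), (Nat.ltb_spec j n), (Nat.ltb_spec i (2 * n)),
  (Nat.ltb_spec j (2 * n)), (Nat.eqb_spec j (i + n)), (Nat.eqb_spec i (j + n)),
  (Nat.eqb_spec (j + n) i), (Nat.eqb_spec (i + n) j); try lia; lra.
Qed.

Lemma Der_eq f a l : derivable_pt_lim f a l -> Der f a = l.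
Proof.
intros Hl; unfold Der; destruct (excluded_middle_informative _) as [Hex|Hnex].
- destruct (constructive_indefinite_description _ Hex) as [l' Hl']; simpl.
  exact (uniqueness_limite f a l' l Hl' Hl).
- exfalso; apply Hnex; exists l; exact Hl.
Qed.

Lemma dlim_plus f g a lf lg : derivable_pt_lim f a lf -> derivable_pt_lim g a lg ->
  derivable_pt_lim (fun s => f s + g s) a (lf + lg).
Proof. apply derivable_pt_lim_plus. Qed.

Lemma dlim_mult f g a lf lg : derivable_pt_lim f a lf -> derivable_pt_lim g a lg ->
  derivable_pt_lim (fun s => f s * g s) a (lf * g a + f a * lg).
Proof. apply derivable_pt_lim_mult. Qed.

Lemma dlim_const c a : derivable_pt_lim (fun _ => c) a 0.
Proof. apply derivable_pt_lim_const. Qed.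

Lemma dlim_id a : derivable_pt_lim (fun s => s) a 1.
Proof. apply derivable_pt_lim_id. Qed.

Lemma dlim_eq f a l l' : derivable_pt_lim f a l -> l = l' -> derivable_pt_lim f a l'.
Proof. intros Hl <-; exact Hl. Qed.

Lemma dlim_square f a l : derivable_pt_lim f a l ->
  derivable_pt_lim (fun s => f s ^ 2) a (2 * f a * l).
Proof.
intros Hl; replace (fun s => f s ^ 2) with (fun s => f s * f s)
  by (apply functional_extensionality; intros; ring).
eapply dlim_eq; [apply dlim_mult; exact Hl | ring].
Qed.

Lemma dlim_rsum k (F : nat -> R -> R) F' a :
  (forall j, (j < k)%nat -> derivable_pt_lim (F j) a (F' j)) ->
  derivable_pt_lim (fun s => rsum k (fun j => F j s)) a (rsum k F').
Proof.
induction k as [|k IH]; intros H; simpl; [apply dlim_const|].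
apply (dlim_plus (fun s => rsum k (fun j => F j s)) (F k));
  [apply IH; intros; apply H | apply H]; lia.
Qed.

Lemma upd_same x i : upd x i (x i) = x.
Proof.
apply functional_extensionality; intros j; unfold upd.
destruct (Nat.eqb_spec j i) as [->|]; reflexivity.
Qed.

Lemma dlim_upd x i j a : derivable_pt_lim (fun s => upd x i s j) a (delta j i).
Proof. unfold upd, delta; destruct (j =? i)%nat; [apply dlim_id | apply dlim_const]. Qed.

Lemma dlim_matvec N A x i k a : (i < N)%nat ->
  derivable_pt_lim (fun s => matvec N A (upd x i s) k) a (A k i).
Proof.
intros Hi; eapply dlim_eq.
- apply (dlim_rsum N (fun j s => A k j * upd x i s j)); intros j _.
  apply dlim_mult; [apply dlim_const | apply dlim_upd].
- rewrite <- (rsum_delta_r N (A k) i Hi); apply rsum_ext; intros; ring.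
Qed.

Lemma dlim_qform N A x i : symmetric N A -> (i < N)%nat ->
  derivable_pt_lim (fun s => qform N A (upd x i s)) (x i) (2 * matvec N A x i).
Proof.
intros HA Hi.
replace (fun s => qform N A (upd x i s))
  with (fun s => rsum N (fun k => matvec N A (upd x i s) k * upd x i s k))
  by (apply functional_extensionality; intros; symmetry; apply qform_matvec_l).
eapply dlim_eq.
- apply (dlim_rsum N (fun k s => matvec N A (upd x i s) k * upd x i s k)); intros k _.
  apply dlim_mult; [apply dlim_matvec; exact Hi | apply dlim_upd].
- cbv beta; rewrite upd_same, rsum_add, rsum_delta_r by exact Hi.
  rewrite (rsum_ext N _ (fun k => A i k * x k)) by (intros; rewrite HA; auto).
  unfold matvec; ring.
Qed.

Lemma phiM_qform n Minv x t : phiM n Minv x t = qform (2 * n) Minv x ^ 2 + t ^ 2.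
Proof. reflexivity. Qed.

Section PhiDerivatives.

Variables (n : nat) (Minv : nat -> nat -> R).
Hypothesis Minv_sym : symmetric (2 * n) Minv.

Lemma Xf_phiM i : (i < 2 * n)%nat ->
  Xf n i (phiM n Minv) = fun x t =>
    4 * qform (2 * n) Minv x * matvec (2 * n) Minv x i + 4 * t * Jx n x i.
Proof.
intros Hi; apply functional_extensionality; intros x; apply functional_extensionality; intros t.
unfold Xf, Defs.Dx, Dt, phiM.
rewrite (Der_eq _ _ (2 * qform (2 * n) Minv x * (2 * matvec (2 * n) Minv x i))).
- rewrite (Der_eq _ _ (2 * t)); [ring|].
  eapply dlim_eq; [apply dlim_plus; [apply dlim_const | apply dlim_square, dlim_id] | cbv beta; ring].
- eapply dlim_eq.
  + apply dlim_plus; [apply dlim_square, dlim_qform; assumption | apply dlim_const].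
  + cbv beta; rewrite upd_same; unfold qform, bform; ring.
Qed.

Lemma Xf_Xf_phiM i j x t : (i < 2 * n)%nat -> (j < 2 * n)%nat ->
  Xf n j (Xf n i (phiM n Minv)) x t =
  8 * matvec (2 * n) Minv x j * matvec (2 * n) Minv x i
  + 4 * qform (2 * n) Minv x * Minv i j + 4 * t * Jmat n i j + 8 * Jx n x j * Jx n x i.
Proof.
intros Hi Hj; rewrite Xf_phiM by exact Hi; unfold Xf, Defs.Dx, Dt.
rewrite (Der_eq _ _ (8 * matvec (2 * n) Minv x j * matvec (2 * n) Minv x i
                     + 4 * qform (2 * n) Minv x * Minv i j + 4 * t * Jmat n i j)).
- rewrite (Der_eq _ _ (4 * Jx n x i)); [ring|].
  eapply dlim_eq.
  + apply dlim_plus; [apply dlim_const | apply dlim_mult; [apply dlim_mult |]];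
      [apply dlim_const | apply dlim_id | apply dlim_const].
  + cbv beta; ring.
- eapply dlim_eq.
  + apply dlim_plus; apply dlim_mult; [apply dlim_mult | | apply dlim_const | ].
    * apply dlim_const.
    * apply dlim_qform; assumption.
    * apply dlim_matvec; exact Hj.
    * apply (dlim_matvec (2 * n) (Jmat n)); exact Hj.
  + cbv beta; rewrite upd_same; ring.
Qed.

Lemma D2H_phiM i j x t : (i < 2 * n)%nat -> (j < 2 * n)%nat ->
  D2H n i j (phiM n Minv) x t =
  8 * matvec (2 * n) Minv x i * matvec (2 * n) Minv x j
  + 4 * qform (2 * n) Minv x * Minv i j + 8 * Jx n x i * Jx n x j.
Proof.
intros Hi Hj; unfold D2H; rewrite !Xf_Xf_phiM by assumption.
rewrite (Minv_sym j i), (J_antisymmetric n j i) by assumption; field.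
Qed.

End PhiDerivatives.

Section SublaplacianIdentity.

Variables (n : nat) (M Minv : nat -> nat -> R).
Hypothesis M_sym : symmetric (2 * n) M.
Hypothesis M_Minv : forall i j, (i < 2 * n)%nat -> (j < 2 * n)%nat ->
  rsum (2 * n) (fun k => M i k * Minv k j) = delta i j.

Let Minv_sym : symmetric (2 * n) Minv := right_inverse_symmetric _ _ _ M_Minv M_sym.

Lemma LM_phiM x t : LM n M (phiM n Minv) x t =
  8 * qform (2 * n) M (matvec (2 * n) Minv x)
  + 4 * qform (2 * n) Minv x * INR (2 * n) + 8 * qform (2 * n) M (Jx n x).
Proof.
unfold LM; rewrite (rsum_ext _ _ (fun i =>
  8 * rsum (2 * n) (fun j => M i j * matvec (2 * n) Minv x j * matvec (2 * n) Minv x i)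
  + 4 * qform (2 * n) Minv x * rsum (2 * n) (fun j => M i j * Minv j i)
  + 8 * rsum (2 * n) (fun j => M i j * Jx n x j * Jx n x i))).
- rewrite !rsum_add, !rsum_scal_l, (trace_right_inverse _ _ _ M_Minv); reflexivity.
- intros i Hi; rewrite <- !rsum_scal_l, <- !rsum_add; apply rsum_ext; intros j Hj.
  rewrite D2H_phiM by assumption; ring.
Qed.

Lemma MgradH_phiM x t : MgradH n M (phiM n Minv) x t =
  16 * qform (2 * n) Minv x ^ 2 * qform (2 * n) M (matvec (2 * n) Minv x)
  + 16 * qform (2 * n) Minv x * t
    * (bform (2 * n) M (matvec (2 * n) Minv x) (Jx n x)
       + bform (2 * n) M (Jx n x) (matvec (2 * n) Minv x))
  + 16 * t ^ 2 * qform (2 * n) M (Jx n x).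
Proof.
change (MgradH n M (phiM n Minv) x t)
  with (qform (2 * n) M (fun k => Xf n k (phiM n Minv) x t)).
rewrite (qform_ext _ M M _ (fun k =>
  (4 * qform (2 * n) Minv x) * matvec (2 * n) Minv x k + (4 * t) * Jx n x k)).
- rewrite qform_comb; ring.
- reflexivity.
- intros k Hk; rewrite Xf_phiM by assumption; reflexivity.
Qed.

Lemma qform_JtMJ_eq_qform_Minv (Hphi : forall x t,
  (Qdim n + 2) / 4 * MgradH n M (phiM n Minv) x t
  = phiM n Minv x t * LM n M (phiM n Minv) x t) x :
  qform (2 * n) (congr (2 * n) (Jmat n) M) x = qform (2 * n) Minv x.
Proof.
assert (Ha : qform (2 * n) M (matvec (2 * n) Minv x) = qform (2 * n) Minv x).
{ rewrite qform_congr; apply qform_ext; [|reflexivity].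
  intros i j Hi Hj; rewrite (congr_right_inverse _ _ _ M_Minv) by assumption; apply Minv_sym; assumption. }
assert (Hb : qform (2 * n) M (Jx n x) = qform (2 * n) (congr (2 * n) (Jmat n) M) x)
  by exact (qform_congr _ _ _ x).
pose proof (Hphi x) as Ht.
setoid_rewrite MgradH_phiM in Ht; setoid_rewrite LM_phiM in Ht.
setoid_rewrite phiM_qform in Ht.
rewrite Ha, Hb in Ht; unfold Qdim in Ht; rewrite mult_INR in Ht.
set (p := qform (2 * n) (congr (2 * n) (Jmat n) M) x) in *.
set (q := qform (2 * n) Minv x) in *.
(* compare the coefficients of [t^2] *)
assert (Hcoef : (INR n + 1) * (p - q) = 0)
  by (generalize (Ht 0) (Ht 1) (Ht (-1)); simpl INR; lra).
pose proof (pos_INR n); apply Rmult_integral in Hcoef; lra.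
Qed.

End SublaplacianIdentity.

Theorem lemma3p2 (n : nat) (M Minv : nat -> nat -> R)
  (Hsym : forall i j, (i < 2 * n)%nat -> (j < 2 * n)%nat -> M i j = M j i)
  (Hpos : forall v : nat -> R, (exists i, (i < 2 * n)%nat /\ v i <> 0) ->
          0 < rsum (2 * n) (fun i => rsum (2 * n) (fun j => v i * M i j * v j)))
  (Hinv_r : forall i j, (i < 2 * n)%nat -> (j < 2 * n)%nat ->
          rsum (2 * n) (fun k => M i k * Minv k j) = delta i j)
  (Hinv_l : forall i j, (i < 2 * n)%nat -> (j < 2 * n)%nat ->
          rsum (2 * n) (fun k => Minv i k * M k j) = delta i j)
  (Heq : forall (x : nat -> R) (t : R),
          (Qdim n + 2) / 4 * MgradH n M (phiM n Minv) x t
          = phiM n Minv x t * LM n M (phiM n Minv) x t) :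
  forall i j, (i < 2 * n)%nat -> (j < 2 * n)%nat ->
    Minv i j = rsum (2 * n) (fun k => rsum (2 * n)
                 (fun l => Jmat n k i * M k l * Jmat n l j)).
Proof.
apply (qform_polarization (2 * n) Minv (congr (2 * n) (Jmat n) M)).
- exact (right_inverse_symmetric _ _ _ Hinv_r Hsym).
- exact (congr_symmetric _ _ _ Hsym).
- intros v; symmetry; exact (qform_JtMJ_eq_qform_Minv n M Minv Hsym Hinv_r Heq v).
Qed.
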